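(* Let $N=\{A,B,C,D,E\}$. The formal dual of the linear form $$Q=I(A;B\mid C)+I(A;B\mid D)+I(C;D)-I(A;B)+I(A;B\mid E)+I(A;E\mid B)+I(B;E\mid A)$$ is the linear form $$Q^\perp=I(C;D\mid AE)+I(C;D\mid BE)+I(A;B\mid E)-I(C;D\mid E)+I(A;B\mid CD)+I(A;E\mid CD)+I(B;E\mid CD).$$ Moreover, for $0<\varepsilon<1/4$ let $(A,B,C,D,E)$ be binary random variables with joint distribution giving probability $\varepsilon$ to each of the tuples $(0,0,0,0,0),(0,1,1,0,0),(1,0,0,1,0),(1,1,0,0,0)$ and probability $1/4-\varepsilon$ to each of $(0,0,0,0,1),(0,1,0,0,1),(1,0,0,0,1),(1,1,0,0,1)$ (listed as $(A,B,C,D,E)$). Then, evaluated on the entropic vector of this distribution, $Q^\perp<0$ for all sufficiently small $\varepsilon>0$. In particular $Q^\perp\ge 0$ is not a valid information inequality.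
   Context: For random variables, $I(X;Y\mid Z)=H(XZ)+H(YZ)-H(XYZ)-H(Z)$ is conditional mutual information ($H$ Shannon entropy, juxtaposition denotes joint variables, $I(X;Y)=I(X;Y\mid\varnothing)$); the same expression defines a linear form on vectors $h$ indexed by subsets of $N$ (with $h(\varnothing)=0$). The dual of $h$ is $h^\perp(J)=h(N\setminus J)-h(N)+\sum_{j\in J}h(\{j\})$, and the formal dual of a linear form $c$ is the linear form $h\mapsto c(h^\perp)$. (The inequality $Q\ge 0$ is a known valid non-Shannon information inequality.) *)

From Stdlib Require Import Reals List.
Open Scope R_scope.

(* Ground set N = {A,B,C,D,E}.  A subset of N is a 5-tuple of booleans
   (membership of A,B,C,D,E respectively).  The same type is used for
   outcomes of the five binary random variables (A,B,C,D,E). *)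
Record S5 := mkS5 { cA : bool; cB : bool; cC : bool; cD : bool; cE : bool }.

Definition emptyS : S5 := mkS5 false false false false false.
Definition fullS  : S5 := mkS5 true true true true true.
Definition sA : S5 := mkS5 true false false false false.
Definition sB : S5 := mkS5 false true false false false.
Definition sC : S5 := mkS5 false false true false false.
Definition sD : S5 := mkS5 false false false true false.
Definition sE : S5 := mkS5 false false false false true.

Definition su (X Y : S5) : S5 :=
  mkS5 (cA X || cA Y) (cB X || cB Y) (cC X || cC Y) (cD X || cD Y) (cE X || cE Y).
Definition scompl (X : S5) : S5 :=
  mkS5 (negb (cA X)) (negb (cB X)) (negb (cC X)) (negb (cD X)) (negb (cE X)).

Definition vec := S5 -> R.
Definition lform := vec -> R.

Definition CMI (X Y Z : S5) (h : vec) : R :=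
  h (su X Z) + h (su Y Z) - h (su (su X Y) Z) - h Z.
Definition MI (X Y : S5) (h : vec) : R := CMI X Y emptyS h.

Definition dualv (h : vec) : vec := fun J =>
  h (scompl J) - h fullS
  + ((if cA J then h sA else 0) + (if cB J then h sB else 0)
     + (if cC J then h sC else 0) + (if cD J then h sD else 0)
     + (if cE J then h sE else 0)).

Definition formal_dual (c : lform) : lform := fun h => c (dualv h).

Definition Q : lform := fun h =>
  CMI sA sB sC h + CMI sA sB sD h + MI sC sD h - MI sA sB h
  + CMI sA sB sE h + CMI sA sE sB h + CMI sB sE sA h.

Definition Qperp : lform := fun h =>
  CMI sC sD (su sA sE) h + CMI sC sD (su sB sE) h + CMI sA sB sE h
  - CMI sC sD sE h + CMI sA sB (su sC sD) h + CMI sA sE (su sC sD) h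
  + CMI sB sE (su sC sD) h.

Definition bools : list bool := true :: false :: nil.
Definition all5 : list S5 :=
  flat_map (fun a => flat_map (fun b => flat_map (fun c => flat_map (fun d =>
    map (fun e => mkS5 a b c d e) bools) bools) bools) bools) bools.

Definition sum5 (f : S5 -> R) : R := fold_right (fun x acc => f x + acc) 0 all5.

Definition agree (J x y : S5) : bool :=
  (implb (cA J) (Bool.eqb (cA x) (cA y))) && (implb (cB J) (Bool.eqb (cB x) (cB y)))
  && (implb (cC J) (Bool.eqb (cC x) (cC y))) && (implb (cD J) (Bool.eqb (cD x) (cD y)))
  && (implb (cE J) (Bool.eqb (cE x) (cE y))).

(* x is the canonical representative of its J-marginal value (zero off J) *)
Definition zero_off (J x : S5) : bool :=
  (implb (negb (cA J)) (negb (cA x))) && (implb (negb (cB J)) (negb (cB x)))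
  && (implb (negb (cC J)) (negb (cC x))) && (implb (negb (cD J)) (negb (cD x)))
  && (implb (negb (cE J)) (negb (cE x))).

Definition marg (p : S5 -> R) (J x : S5) : R :=
  sum5 (fun y => if agree J x y then p y else 0).

Definition log2 (x : R) : R := ln x / ln 2.
(* -t log t with the convention 0 log 0 = 0 *)
Definition negxlogx (t : R) : R := if Rle_dec t 0 then 0 else - (t * log2 t).

Definition entropy_vec (p : S5 -> R) : vec := fun J =>
  sum5 (fun x => if zero_off J x then negxlogx (marg p J x) else 0).

Definition b2n (b : bool) : nat := if b then 1%nat else 0%nat.
Definition tup (x : S5) : list nat :=
  map b2n (cA x :: cB x :: cC x :: cD x :: cE x :: nil).

Definition peps (eps : R) (x : S5) : R :=
  match tup x return R with
  | 0::0::0::0::0::nil | 0::1::1::0::0::nil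
  | 1::0::0::1::0::nil | 1::1::0::0::0::nil => eps
  | 0::0::0::0::1::nil | 0::1::0::0::1::nil
  | 1::0::0::0::1::nil | 1::1::0::0::1::nil => 1/4 - eps
  | _ => 0
  end.

(* The duality statement is a linear identity in the coordinates of h.
   For the distribution p_eps, all entropies are explicit and, in nats,
     ln 2 * Q^perp(h_eps)
       = eps (6 ln 3 - 10 ln 2) + (1-4eps)/2 ln(1-4eps) - (1-2eps) ln(1-2eps).
   The two logarithmic terms are O(eps^2) by ln x <= x - 1 and x ln x >= x - 1,
   while the linear coefficient is negative because 3^6 < 2^10. *)

From Stdlib Require Import Reals Lra List.
Open Scope R_scope.

Lemma ln_2_gt0 : 0 < ln 2.
Proof. rewrite <- ln_1. apply ln_increasing; lra. Qed.

Lemma ln_2_neq0 : ln 2 <> 0.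
Proof. apply Rgt_not_eq, ln_2_gt0. Qed.

Lemma ln_div (x y : R) : 0 < x -> 0 < y -> ln (x / y) = ln x - ln y.
Proof.
intros x_gt0 y_gt0. unfold Rdiv.
rewrite ln_mult, ln_Rinv; [ring | | |]; auto using Rinv_0_lt_compat.
Qed.

Lemma ln_le_sub1 (x : R) : 0 < x -> ln x <= x - 1.
Proof. intros x_gt0. pose proof (exp_ineq1_le (ln x)) as H. rewrite exp_ln in H; lra. Qed.

Lemma sub1_le_xlnx (x : R) : 0 < x -> x - 1 <= x * ln x.
Proof.
intros x_gt0.
pose proof (ln_le_sub1 (/ x) (Rinv_0_lt_compat x x_gt0)) as H.
rewrite ln_Rinv in H by exact x_gt0.
apply (Rmult_le_compat_l x) in H; [| lra].
rewrite Rmult_minus_distr_l, Rinv_r in H by lra. lra.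
Qed.

Lemma six_ln3_lt_ten_ln2 : 6 * ln 3 < 10 * ln 2.
Proof.
assert (H : ln (3 ^ 6) < ln (2 ^ 10)) by (apply ln_increasing; [apply pow_lt |]; lra).
rewrite !ln_pow in H by lra. simpl INR in H. lra.
Qed.

Lemma negxlogx_0 : negxlogx 0 = 0.
Proof. unfold negxlogx. destruct (Rle_dec 0 0); lra. Qed.

Lemma negxlogx_gt0 (t : R) : 0 < t -> negxlogx t = - (t * ln t) / ln 2.
Proof.
intros t_gt0. unfold negxlogx, log2. destruct (Rle_dec t 0); [lra |].
field. apply ln_2_neq0.
Qed.

Lemma negxlogx_congr (a b : R) : a = b -> negxlogx a = negxlogx b.
Proof. now intros ->. Qed.

Lemma formal_dual_Q (h : vec) : formal_dual Q h = Qperp h.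
Proof.
unfold formal_dual, Q, Qperp, MI, CMI, dualv.
lazy beta iota zeta delta [su scompl sA sB sC sD sE emptyS fullS cA cB cC cD cE orb negb].
ring.
Qed.

Definition pweights (p q : R) (x : S5) : R :=
  match tup x return R with
  | 0::0::0::0::0::nil | 0::1::1::0::0::nil
  | 1::0::0::1::0::nil | 1::1::0::0::0::nil => p
  | 0::0::0::0::1::nil | 0::1::0::0::1::nil
  | 1::0::0::0::1::nil | 1::1::0::0::1::nil => q
  | _ => 0
  end.

Lemma peps_pweights (eps : R) : peps eps = pweights eps (1/4 - eps).
Proof. reflexivity. Qed.

(* Computed marginals are sums of p's and q's in enumeration order; rewriting each
   argument of [negxlogx] to the ring-equal member of [vals] lets [ring] collect
   equal entropies. *)
Ltac normalize_negxlogx vals :=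
  let rec canonical a vs :=
    lazymatch vs with
    | ?b :: ?rest => first [ constr_eq a b | canonical a rest ]
    end in
  let rec rewrite_to a vs :=
    lazymatch vs with
    | ?b :: ?rest => first [ rewrite (negxlogx_congr a b) by ring | rewrite_to a rest ]
    end in
  repeat match goal with
  | |- context [negxlogx ?a] =>
      tryif canonical a vals then fail else rewrite_to a vals
  end.

Lemma Qperp_entropy_pweights (p q : R) : Qperp (entropy_vec (pweights p q)) =
  7 * negxlogx (2 * p) - 8 * negxlogx p - 2 * negxlogx (3 * p) - 6 * negxlogx q
  + 8 * negxlogx (p + 2 * q) - 2 * negxlogx (p + q) + negxlogx (4 * q)
  - 3 * negxlogx (2 * p + 4 * q).
Proof.
unfold Qperp.
lazy beta iota zeta delta [CMI MI su scompl sA sB sC sD sE emptyS fullS cA cB cC cD cE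
  orb negb andb implb Bool.eqb entropy_vec sum5 all5 flat_map map bools app fold_right
  zero_off marg agree pweights tup b2n].
normalize_negxlogx
  (0 :: p :: 2 * p :: 3 * p :: q :: 2 * q :: 4 * q :: p + q :: p + 2 * q :: 2 * p + 4 * q :: nil).
rewrite negxlogx_0. ring.
Qed.

Lemma Qperp_entropy_peps (eps : R) : 0 < eps -> eps < 1/4 ->
  Qperp (entropy_vec (peps eps)) * ln 2 =
  eps * (6 * ln 3 - 10 * ln 2)
  + (1 - 4 * eps) / 2 * ln (1 - 4 * eps) - (1 - 2 * eps) * ln (1 - 2 * eps).
Proof.
intros eps_gt0 eps_lt.
rewrite peps_pweights, Qperp_entropy_pweights.
replace (eps + 2 * (1/4 - eps)) with ((1 - 2 * eps) / 2) by field.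
replace (eps + (1/4 - eps)) with (1/4) by ring.
replace (2 * eps + 4 * (1/4 - eps)) with (1 - 2 * eps) by field.
replace (4 * (1/4 - eps)) with (1 - 4 * eps) by field.
replace (1/4 - eps) with ((1 - 4 * eps) / 4) by field.
rewrite !negxlogx_gt0 by lra.
assert (ln_4 : ln 4 = 2 * ln 2).
{ replace 4 with (2 * 2) by ring. rewrite ln_mult; lra. }
rewrite !ln_mult, !ln_div, ln_1, ln_4 by lra.
field. apply ln_2_neq0.
Qed.

Lemma ln_correction_le (t : R) : 0 < t -> t < 1/4 ->
  (1 - 4 * t) / 2 * ln (1 - 4 * t) - (1 - 2 * t) * ln (1 - 2 * t) <= 8 * t ^ 2.
Proof.
intros t_gt0 t_lt.
pose proof (ln_le_sub1 (1 - 4 * t)) as ln_le.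
pose proof (sub1_le_xlnx (1 - 2 * t)) as xlnx_ge.
nra.
Qed.

Lemma Qperp_entropy_peps_lt0 (eps : R) : 0 < eps -> eps < 1/4 ->
  8 * eps < 10 * ln 2 - 6 * ln 3 -> Qperp (entropy_vec (peps eps)) < 0.
Proof.
intros eps_gt0 eps_lt eps_small.
pose proof (Qperp_entropy_peps eps eps_gt0 eps_lt) as closed_form.
pose proof (ln_correction_le eps eps_gt0 eps_lt) as correction.
pose proof ln_2_gt0.
nra.
Qed.

Theorem mainTheorem6 :
  (forall h : vec, h emptyS = 0 -> formal_dual Q h = Qperp h) /\
  (exists delta : R, 0 < delta /\
     forall eps : R, 0 < eps -> eps < 1/4 -> eps < delta ->
       Qperp (entropy_vec (peps eps)) < 0) /\
  (exists eps : R, 0 < eps /\ eps < 1/4 /\ Qperp (entropy_vec (peps eps)) < 0).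
Proof.
pose (delta := (10 * ln 2 - 6 * ln 3) / 8).
assert (delta_gt0 : 0 < delta) by (pose proof six_ln3_lt_ten_ln2; unfold delta; lra).
assert (small_eps_lt0 : forall eps, 0 < eps -> eps < 1/4 -> eps < delta ->
          Qperp (entropy_vec (peps eps)) < 0).
{ intros eps ? ? ?. apply Qperp_entropy_peps_lt0; unfold delta in *; lra. }
split; [| split].
- (* h(emptyS) cancels on both sides. *)
  intros h _. apply formal_dual_Q.
- exists delta. split; assumption.
- exists (Rmin (delta / 2) (1/8)).
  pose proof (Rmin_l (delta / 2) (1/8)). pose proof (Rmin_r (delta / 2) (1/8)).
  assert (0 < Rmin (delta / 2) (1/8)) by (apply Rmin_glb_lt; lra).
  repeat split; try lra. apply small_eps_lt0; lra.
Qed.
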